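(* Let $\iota:\mathcal{S}_\bullet\to\mathcal{T}_\bullet$ be the linear map sending $\sigma\in S_n$ to the set composition $(\{\sigma(1)\},\ldots,\{\sigma(n)\})\in\mathsf{Comp}_n$. Then $\iota$ is an injective morphism of Hopf algebras $(\mathcal{S}_\bullet,\times,\hat{\delta})\to(\mathcal{T}_\bullet,\overline{\ast},\hat{\delta})$ (an embedding of enveloping algebras), and it is also an injective morphism of Hopf algebras from the Malvenuto–Reutenauer Hopf algebra $(\mathcal{S}_\bullet,\ast,\overline{\delta})$ into $(\mathcal{T}_\bullet,\hat{\ast},\overline{\delta})$.
   Context: $[n]=\{1,\ldots,n\}$; $\mathcal{S}_\bullet=\bigoplus_{n\ge0}\mathbb{Z}[S_n]$, a permutation $\sigma\in S_n$ being identified with the word $(\sigma(1),\ldots,\sigma(n))$. For a word $w$ in distinct positive integers and a set $A$, $w|_A$ is the subsequence of letters in $A$, and $\mathsf{is}_A$ standardizes (replaces letters by their ranks). On $\mathcal{S}_\bullet$: $(\alpha\times\beta)(i)=\alpha(i)$ for $i\le n$ and $n+\beta(i-n)$ for $i>n$ ($\alpha\in S_n$, $\beta\in S_m$); $\hat{\delta}(\alpha)=\sum_{S\sqcup T=[n]}\mathsf{is}_S(\alpha|_S)\otimes\mathsf{is}_T(\alpha|_T)$; $\alpha\ast\beta=q_{(n,m)}\cdot(\alpha\times\beta)$ (product in $\mathbb{Z}[S_{n+m}]$), where $q_{(n,m)}$ is the sum of all $\pi\in S_{n+m}$ with $\pi(1)<\cdots<\pi(n)$ and $\pi(n+1)<\cdots<\pi(n+m)$;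 $\overline{\delta}(\alpha)=\sum_{i=0}^n\alpha|_{[i]}\otimes\mathsf{is}_{\{i+1,\ldots,n\}}(\alpha|_{\{i+1,\ldots,n\}})$. Set compositions: a set composition of a finite $S\subset\mathbb{N}$ is a tuple of pairwise disjoint non-empty subsets with union $S$; $\mathsf{Comp}_n$ is the set of those of $[n]$; $\mathcal{T}_\bullet=\bigoplus_n\mathbb{Z}[\mathsf{Comp}_n]$. $\mathsf{is}_{S,T}$ relabels blockwise by the order-preserving bijection $S\to T$, $\mathsf{is}_S=\mathsf{is}_{S,[|S|]}$; $P|_A=\mathsf{is}_A((P_1\cap A,\ldots,P_k\cap A)^\#)$, $^\#$ deleting empty entries; $\ast$ is concatenation of tuples on disjoint ground sets. For $P=(P_1,\ldots,P_k)\in\mathsf{Comp}_p$, $Q=(Q_1,\ldots,Q_l)\in\mathsf{Comp}_q$: $P\,\overline{\ast}\,Q=(P_1,\ldots,P_k,p+Q_1,\ldots,p+Q_l)$ with $p+X=\{p+x\}$; $P\,\hat{\ast}\,Q=\sum_{A\sqcup B=[p+q],|A|=p}\mathsf{is}_{[p],A}(P)\ast\mathsf{is}_{[q],B}(Q)$. For $P\in\mathsf{Comp}_n$: $\hat{\delta}(P)=\sum_{A\sqcup B=[n]}P|_A\otimes P|_B$, $\overline{\delta}(P)=\sum_{p+q=n}P|_{[p]}\otimes P|_{\{p+1,\ldots,n\}}$. *)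

From HB Require Import structures.
From mathcomp Require Import all_boot all_order all_algebra.
From mathcomp Require Import finmap.
From mathcomp.multinomials Require Import freeg.

Set Implicit Arguments.
Unset Strict Implicit.
Unset Printing Implicit Defensive.

Import Order.TTheory GRing.Theory Num.Theory.
Local Open Scope fset_scope.

(* The free Z-module on a basis K is {freeg K / int}; the tensor       *)
(* product of free modules on bases K1, K2 is the free module on       *)
(* K1 * K2.                                                            *)

Definition FZ (K : choiceType) := {freeg K / int}.

Definition bas (K : choiceType) (k : K) : FZ K := << k >>.

Definition lin (K1 K2 : choiceType) (f : K1 -> FZ K2) (x : FZ K1) : FZ K2 :=
  fglift f x.

Definition bilin (K1 K2 K3 : choiceType) (m : K1 -> K2 -> FZ K3)
  (x : FZ K1) (y : FZ K2) : FZ K3 :=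
  fglift (fun a => fglift (fun b => m a b) y) x.

Definition tens (K1 K2 L1 L2 : choiceType) (f : K1 -> FZ L1) (g : K2 -> FZ L2)
  (t : FZ (K1 * K2)%type) : FZ (L1 * L2)%type :=
  fglift (fun p => bilin (fun a b => bas (a, b)) (f p.1) (g p.2)) t.

Definition fint (a k : nat) : {fset nat} := [fset i | i in iota a k].
Definition fiota (n : nat) : {fset nat} := fint 1 n.

(* rank of x in the finite set A (1-based for x \in A): this is the    *)
(* order-preserving bijection A -> [|A|], i.e. is_A on letters         *)
Definition rank (A : {fset nat}) (x : nat) : nat := #|` [fset y in A | y <= x]|.

(* the order-preserving bijection S -> T (for |S| = |T|) *)
Definition relab (S T : {fset nat}) (x : nat) : nat :=
  nth 0 (sort leq (enum_fset T)) (rank S x).-1.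

Definition word := seq nat.

Definition is_perm_word (w : word) : bool := perm_eq w (iota 1 (size w)).

(* S_bullet = span of all permutation words inside FZ word *)
Definition inS (x : FZ word) : Prop := all is_perm_word (dom x).

Definition wrestr (w : word) (A : {fset nat}) : word := [seq x <- w | x \in A].
Definition wis (A : {fset nat}) (w : word) : word := map (rank A) w.

Definition wcross (a b : word) : FZ word := bas (a ++ map (addn (size a)) b).

(* product in Z[S_n], with (pi tau)(i) = pi (tau i) *)
Definition wcomp (p t : word) : FZ word := bas (map (fun i => nth 0 p i.-1) t).
Definition gmul (x y : FZ word) : FZ word := bilin wcomp x y.

(* q_(n,m): sum of pi in S_(n+m) increasing on [n] and on {n+1..n+m};  *)
(* such pi is determined by A = pi([n]) *)
Definition qnm (n m : nat) : FZ word :=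
  (\sum_(A <- enum_fset (fpowerset (fiota (n + m)%N)) | #|` A| == n)
     bas (sort leq (enum_fset A) ++ sort leq (enum_fset (fiota (n + m)%N `\` A))))%R.

Definition wstar (a b : word) : FZ word :=
  gmul (qnm (size a) (size b)) (wcross a b).

Definition wdhat (a : word) : FZ (word * word)%type :=
  let n := size a in
  (\sum_(S <- enum_fset (fpowerset (fiota n)))
     bas (wis S (wrestr a S), wis (fiota n `\` S) (wrestr a (fiota n `\` S))))%R.

Definition wdbar (a : word) : FZ (word * word)%type :=
  let n := size a in
  (\sum_(0 <= i < n.+1)
     bas (wrestr a (fiota i), wis (fint i.+1 (n - i)%N) (wrestr a (fint i.+1 (n - i)%N))))%R.

Definition scomp := seq {fset nat}.

Definition cdeg (P : scomp) : nat := \sum_(B <- P) #|` B|.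

Definition crelab (S T : {fset nat}) (P : scomp) : scomp :=
  map (fun B => [fset relab S T x | x in B]) P.
Definition cis (A : {fset nat}) (P : scomp) : scomp :=
  map (fun B => [fset rank A x | x in B]) P.

Definition crestr (P : scomp) (A : {fset nat}) : scomp :=
  cis A [seq B <- map (fun B => B `&` A) P | B != fset0].

Definition cbar (P Q : scomp) : FZ scomp :=
  bas (P ++ map (fun B => [fset (cdeg P + x)%N | x in B]) Q).

Definition chat (P Q : scomp) : FZ scomp :=
  let p := cdeg P in let q := cdeg Q in
  (\sum_(A <- enum_fset (fpowerset (fiota (p + q)%N)) | #|` A| == p)
     bas (crelab (fiota p) A P ++ crelab (fiota q) (fiota (p + q)%N `\` A) Q))%R.

Definition cdhat (P : scomp) : FZ (scomp * scomp)%type :=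
  let n := cdeg P in
  (\sum_(A <- enum_fset (fpowerset (fiota n)))
     bas (crestr P A, crestr P (fiota n `\` A)))%R.

Definition cdbar (P : scomp) : FZ (scomp * scomp)%type :=
  let n := cdeg P in
  (\sum_(0 <= p < n.+1) bas (crestr P (fiota p), crestr P (fint p.+1 (n - p)%N)))%R.

Definition iota_b (w : word) : FZ scomp := bas (map (fun x => [fset x]) w).
Definition iotaL (x : FZ word) : FZ scomp := lin iota_b x.

Definition unitS : FZ word := bas [::].
Definition unitT : FZ scomp := bas [::].
Definition counitS (x : FZ word) : int := coeff [::] x.
Definition counitT (x : FZ scomp) : int := coeff [::] x.

From HB Require Import structures.
From mathcomp Require Import all_boot all_order all_algebra.
From mathcomp Require Import finmap.
From mathcomp.multinomials Require Import freeg.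

Set Implicit Arguments.
Unset Strict Implicit.
Unset Printing Implicit Defensive.

Import GRing.Theory.
Local Open Scope fset_scope.

(* iota sends a word to the composition of its letters into singleton
   blocks, so each structure map of T_bullet, evaluated on a singleton
   composition, is literally the corresponding operation on words:
   restricting blocks to a set and standardizing is restricting and
   standardizing letters, shifting blocks is shifting letters, relabelling
   blocks along the increasing bijection [p] -> A is relabelling letters.
   The one step with content is the shuffle product: the shuffle pi in
   q_(n,m) with pi([n]) = A, composed with alpha x beta, relabels the letters
   of alpha along [n] -> A and those of beta along [m] -> [n+m] \ A, which
   is the summand of P hat-* Q indexed by A.  Everything then extends by
   (bi)linearity, and iota is injective because it maps the basis of words
   injectively into the basis of set compositions. *)

Section LinearExtension.
Local Open Scope ring_scope.
Variables (K : choiceType) (M : lmodType int) (f : K -> M).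

HB.instance Definition _ :=
  GRing.isAdditive.Build (FZ K) M (fglift f) (lift_is_additive f).

Lemma fglift_bas k : fglift f (bas k) = f k.
Proof. by rewrite liftU scale1r. Qed.

Lemma fgliftZ (c : int) x : fglift f (c *: x) = c *: fglift f x.
Proof. by rewrite -[c]intz !scaler_int raddfMz. Qed.

Lemma fglift_dom x : fglift f x = \sum_(k <- dom x) coeff k x *: f k.
Proof.
by rewrite -{1}[x]freeg_sumE raddf_sum; apply: eq_bigr => k _ /=; rewrite liftU.
Qed.

End LinearExtension.

Lemma eq_in_fglift (K : choiceType) (M : lmodType int) (f g : K -> M) x :
  {in dom x, f =1 g} -> fglift f x = fglift g x.
Proof.
by move=> fg; rewrite !fglift_dom !big_seq; apply: eq_bigr => k /fg ->.
Qed.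

Lemma fglift_comp (K L : choiceType) (M : lmodType int)
    (f : K -> FZ L) (g : L -> M) x :
  fglift g (fglift f x) = fglift (fun k => fglift g (f k)) x.
Proof.
rewrite [fglift f x]fglift_dom raddf_sum [RHS]fglift_dom.
by apply: eq_bigr => k _ /=; rewrite fgliftZ.
Qed.

Section InjectiveBasisMap.
Variables (K L : choiceType) (phi : K -> L).
Hypothesis phi_inj : injective phi.

Lemma coeff_lin_bas k x : coeff (phi k) (lin (fun k => bas (phi k)) x) = coeff k x.
Proof.
(* [coeff] is [fglift] into the regular module [int^o], which is not inferred *)
rewrite /coeff /lin fglift_comp; apply: (eq_in_fglift (M := int^o)) => k' _.
by rewrite fglift_bas (inj_eq phi_inj).
Qed.

Lemma lin_bas_inj : injective (lin (fun k => bas (phi k))).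
Proof.
by move=> x y exy; apply/eqP/freeg_eqP => k; rewrite -!coeff_lin_bas exy.
Qed.

End InjectiveBasisMap.

Lemma lin_lin_morph (K K' L L' : choiceType) (phi : K -> L)
    (D1 : K -> FZ K') (D2 : L -> FZ L') (h : K' -> FZ L') x :
  {in dom x, forall a, lin h (D1 a) = D2 (phi a)} ->
  lin h (lin D1 x) = lin D2 (lin (fun k => bas (phi k)) x).
Proof.
move=> hD; rewrite /lin !fglift_comp; apply: eq_in_fglift => a /hD.
by rewrite fglift_bas.
Qed.

Lemma lin_bilin_morph (K1 K2 K3 L1 L2 L3 : choiceType)
    (phi1 : K1 -> L1) (phi2 : K2 -> L2) (h : K3 -> FZ L3)
    (m1 : K1 -> K2 -> FZ K3) (m2 : L1 -> L2 -> FZ L3) x y :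
  (forall a b, a \in dom x -> b \in dom y ->
     lin h (m1 a b) = m2 (phi1 a) (phi2 b)) ->
  lin h (bilin m1 x y) =
  bilin m2 (lin (fun k => bas (phi1 k)) x) (lin (fun k => bas (phi2 k)) y).
Proof.
move=> hm; rewrite /bilin /lin !fglift_comp; apply: eq_in_fglift => a ax.
rewrite fglift_bas !fglift_comp; apply: eq_in_fglift => b bx.
by rewrite fglift_bas; exact: hm.
Qed.

Lemma tens_bas (K1 K2 L1 L2 : choiceType) (phi1 : K1 -> L1) (phi2 : K2 -> L2) u v :
  tens (fun k => bas (phi1 k)) (fun k => bas (phi2 k)) (bas (u, v)) =
  bas (phi1 u, phi2 v).
Proof. by rewrite /tens /bilin !fglift_bas. Qed.

Lemma tens_sum (K1 K2 L1 L2 : choiceType) (f1 : K1 -> FZ L1) (f2 : K2 -> FZ L2)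
    (I : Type) (r : seq I) (P : pred I) (F : I -> FZ (K1 * K2)%type) :
  tens f1 f2 (\sum_(i <- r | P i) F i)%R =
  (\sum_(i <- r | P i) tens f1 f2 (F i))%R.
Proof. exact: raddf_sum. Qed.

Lemma card_fiota n : #|` fiota n| = n.
Proof. by rewrite card_fseq undup_id ?iota_uniq // size_iota. Qed.

Lemma mem_fiota n x : (x \in fiota n) = (0 < x <= n).
Proof. by rewrite !inE mem_iota add1n ltnS. Qed.

Lemma rank_fiota n x : x \in fiota n -> rank (fiota n) x = x.
Proof.
rewrite mem_fiota => /andP[x_gt0 x_le_n]; rewrite /rank -[RHS]card_fiota.
congr #|` _|; apply/fsetP => y; rewrite !inE /= !mem_iota !add1n !ltnS.
by apply/idP/idP => [/andP[/andP[-> _] ->] | /andP[-> y_le_x]] //=;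
   rewrite y_le_x (leq_trans y_le_x x_le_n).
Qed.

Lemma relab_fiota n T x : x \in fiota n ->
  relab (fiota n) T x = nth 0 (sort leq (enum_fset T)) x.-1.
Proof. by move=> xn; rewrite /relab rank_fiota. Qed.

Lemma wis_wrestr_fiota n a : wis (fiota n) (wrestr a (fiota n)) = wrestr a (fiota n).
Proof.
rewrite /wis -[RHS]map_id; apply/eq_in_map => x.
by rewrite mem_filter => /andP[/rank_fiota].
Qed.

Lemma perm_word_sub a : is_perm_word a -> {subset a <= fiota (size a)}.
Proof. by move=> /perm_mem pa x; rewrite pa mem_iota mem_fiota add1n ltnS. Qed.

(* [sort A ++ sort B] is the word of the shuffle pi with pi([n]) = A, and the
   left-hand side is the word of its composite with [a x b]. *)
Lemma shuffle_comp (A B : {fset nat}) a b :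
  #|` A| = size a -> {subset a <= fiota (size a)} -> {subset b <= fiota (size b)} ->
  [seq nth 0 (sort leq (enum_fset A) ++ sort leq (enum_fset B)) i.-1
     | i <- a ++ map (addn (size a)) b] =
  map (relab (fiota (size a)) A) a ++ map (relab (fiota (size b)) B) b.
Proof.
move=> cardA sub_a sub_b; rewrite map_cat -map_comp; congr (_ ++ _).
  apply/eq_in_map => x /sub_a xa; rewrite relab_fiota // nth_cat size_sort.
  by move: xa; rewrite mem_fiota -cardA; case: x => //= x ->.
apply/eq_in_map => y /sub_b yb; rewrite relab_fiota //= nth_cat size_sort.
move: yb; rewrite mem_fiota cardA; case: y => //= y _.
by rewrite addnS /= ltnNge leq_addr addKn.
Qed.

Definition singletons (w : word) : scomp := map (fun x => [fset x]) w.

Lemma singletons_inj : injective singletons.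
Proof.
by apply: inj_map => x y /fsetP /(_ x); rewrite !inE eqxx => /esym /eqP.
Qed.

Lemma cdeg_singletons a : cdeg (singletons a) = size a.
Proof.
rewrite /cdeg big_map; under eq_bigr do rewrite cardfs1; exact: sum1_size.
Qed.

Lemma map_imfset_singletons (f : nat -> nat) a :
  map (fun B => [fset f x | x in B]) (singletons a) = singletons (map f a).
Proof.
by rewrite /singletons -!map_comp; apply: eq_map => x /=; rewrite imfset_fset1.
Qed.

Lemma crestr_singletons a S :
  crestr (singletons a) S = singletons (wis S (wrestr a S)).
Proof.
rewrite /crestr /wis -map_imfset_singletons; congr map.
elim: a => //= x a ->; rewrite fsetIC fsetI1.
case: (x \in S) => //=; suff -> : [fset x] != fset0 by [].
by apply/eqP => /fsetP /(_ x); rewrite !inE eqxx.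
Qed.

Lemma iotaL_bas a : iotaL (bas a) = bas (singletons a).
Proof. exact: fglift_bas. Qed.

Lemma iotaL_wcross a b : iotaL (wcross a b) = cbar (singletons a) (singletons b).
Proof.
by rewrite iotaL_bas /cbar cdeg_singletons map_imfset_singletons /singletons map_cat.
Qed.

Lemma iotaL_wstar a b : is_perm_word a -> is_perm_word b ->
  iotaL (wstar a b) = chat (singletons a) (singletons b).
Proof.
move=> /perm_word_sub sub_a /perm_word_sub sub_b.
rewrite /wstar /chat /gmul /bilin /qnm !cdeg_singletons raddf_sum.
rewrite [iotaL _]raddf_sum; apply: eq_bigr => A /eqP cardA /=.
rewrite !fglift_bas shuffle_comp // /crelab !map_imfset_singletons.
by rewrite /iota_b /singletons map_cat.
Qed.

Lemma tens_wdhat a :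
  tens iota_b iota_b (wdhat a) = cdhat (singletons a).
Proof.
rewrite /cdhat tens_sum cdeg_singletons; apply: eq_bigr => S _.
by rewrite tens_bas !crestr_singletons.
Qed.

Lemma tens_wdbar a :
  tens iota_b iota_b (wdbar a) = cdbar (singletons a).
Proof.
rewrite /cdbar tens_sum cdeg_singletons; apply: eq_bigr => i _.
by rewrite tens_bas !crestr_singletons wis_wrestr_fiota.
Qed.

Theorem theorem4p4 :
  (* injectivity on S_bullet *)
  (forall x y : FZ word, inS x -> inS y -> iotaL x = iotaL y -> x = y) /\
  (* unit and counit (common to both structures) *)
  iotaL unitS = unitT /\
  (forall x : FZ word, inS x -> counitT (iotaL x) = counitS x) /\
  (* (1) enveloping-algebra structures *)
  (forall x y : FZ word, inS x -> inS y ->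
     iotaL (bilin wcross x y) = bilin cbar (iotaL x) (iotaL y)) /\
  (forall x : FZ word, inS x ->
     tens iota_b iota_b (lin wdhat x) = lin cdhat (iotaL x)) /\
  (* (2) Malvenuto--Reutenauer structures *)
  (forall x y : FZ word, inS x -> inS y ->
     iotaL (bilin wstar x y) = bilin chat (iotaL x) (iotaL y)) /\
  (forall x : FZ word, inS x ->
     tens iota_b iota_b (lin wdbar x) = lin cdbar (iotaL x)).
Proof.
split; first by move=> x y _ _; exact: (@lin_bas_inj _ _ _ singletons_inj x y).
split; first exact: iotaL_bas.
split; first by move=> x _; exact: coeff_lin_bas singletons_inj [::] x.
split.
  by move=> x y _ _; apply: lin_bilin_morph => a b _ _; exact: iotaL_wcross.
split; first by move=> x _; apply: lin_lin_morph => a _; exact: tens_wdhat.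
split; last by move=> x _; apply: lin_lin_morph => a _; exact: tens_wdbar.
move=> x y /allP perm_x /allP perm_y; apply: lin_bilin_morph => a b xa yb.
by apply: iotaL_wstar; [exact: perm_x | exact: perm_y].
Qed.
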